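(* Let $A=\{\mathbf{a}_1,\dots,\mathbf{a}_m\}\subset\mathbb{Z}^n$ be such that $\mathbb{N}A$ is an affine semigroup, and let $E_1,E_2$ be nonempty disjoint subsets of $\{1,\dots,m\}$ with $E_1\cup E_2=\{1,\dots,m\}$. If $\mathbb{N}A$ is the gluing of $\mathbb{N}A^{E_1}$ and $\mathbb{N}A^{E_2}$, then $\sigma=\mathrm{pos}_{\mathbb{Q}}(A)$ is the direct sum $\sigma_{E_1}\oplus\sigma_{E_2}$, i.e. there is $\mathbf{a}\in\sigma_{E_1}\cap\sigma_{E_2}$ with $\mathrm{span}_{\mathbb{Q}}(\sigma_{E_1})\cap\mathrm{span}_{\mathbb{Q}}(\sigma_{E_2})=\mathbb{Q}\mathbf{a}$, and $\sigma=\mathrm{pos}_{\mathbb{Q}}(\sigma_{E_1}\cup\sigma_{E_2})$.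
   Context: $\mathbb{N}A=\{\sum n_i\mathbf{a}_i: n_i\in\mathbb{N}\}$. An affine semigroup is a finitely generated subsemigroup $S$ of $\mathbb{Z}^n$ with $S\cap(-S)=\{\mathbf 0\}$. For $E\subset\{1,\dots,m\}$, $A^E=\{\mathbf{a}_i:i\in E\}$ and $\sigma_E=\mathrm{pos}_{\mathbb{Q}}(A^E)$ (nonnegative rational combinations). $\mathbb{N}A$ is the gluing of $\mathbb{N}A^{E_1}$ and $\mathbb{N}A^{E_2}$ if there is a nonzero $\mathbf{a}\in\mathbb{N}A^{E_1}\cap\mathbb{N}A^{E_2}$ with $\mathbb{Z}\mathbf{a}=\mathbb{Z}A^{E_1}\cap\mathbb{Z}A^{E_2}$. *)

From HB Require Import structures.
From mathcomp Require Import all_boot all_order all_algebra.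
Set Implicit Arguments. Unset Strict Implicit. Unset Printing Implicit Defensive.
Import Order.TTheory GRing.Theory Num.Theory.
Local Open Scope ring_scope.

Definition toQ n (v : 'rV[int]_n) : 'rV[rat]_n := map_mx (fun z : int => z%:~R) v.

Definition NA n m (A : 'I_m -> 'rV[int]_n) (E : {set 'I_m}) (v : 'rV[int]_n) : Prop :=
  exists c : 'I_m -> nat, v = \sum_(i in E) (c i)%:R *: A i.

Definition ZA n m (A : 'I_m -> 'rV[int]_n) (E : {set 'I_m}) (v : 'rV[int]_n) : Prop :=
  exists c : 'I_m -> int, v = \sum_(i in E) c i *: A i.

(* N A is an affine semigroup (finitely generated by construction):
   S ∩ (-S) = {0} *)
Definition affine_semigroup n m (A : 'I_m -> 'rV[int]_n) : Prop :=
  forall v, NA A setT v -> NA A setT (- v) -> v = 0.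

Definition posQ n (P : 'rV[rat]_n -> Prop) (v : 'rV[rat]_n) : Prop :=
  exists (k : nat) (x : 'I_k -> 'rV[rat]_n) (c : 'I_k -> rat),
    (forall j, P (x j)) /\ (forall j, 0 <= c j) /\ v = \sum_(j < k) c j *: x j.

Definition spanQ n (P : 'rV[rat]_n -> Prop) (v : 'rV[rat]_n) : Prop :=
  exists (k : nat) (x : 'I_k -> 'rV[rat]_n) (c : 'I_k -> rat),
    (forall j, P (x j)) /\ v = \sum_(j < k) c j *: x j.

Definition gens n m (A : 'I_m -> 'rV[int]_n) (E : {set 'I_m}) (v : 'rV[rat]_n) : Prop :=
  exists2 i, i \in E & v = toQ (A i).

Definition sigma n m (A : 'I_m -> 'rV[int]_n) (E : {set 'I_m}) : 'rV[rat]_n -> Prop :=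
  posQ (gens A E).

Definition gluing n m (A : 'I_m -> 'rV[int]_n) (E1 E2 : {set 'I_m}) : Prop :=
  exists a : 'rV[int]_n,
    a != 0 /\ NA A E1 a /\ NA A E2 a /\
    (forall v, (ZA A E1 v /\ ZA A E2 v) <-> exists z : int, v = z *: a).

From HB Require Import structures.
From mathcomp Require Import all_boot all_order all_algebra.
Import Order.TTheory GRing.Theory Num.Theory.
Local Open Scope ring_scope.

(* A vector lying in both rational spans becomes, after clearing denominators,
   an integer vector in Z A^E1 and in Z A^E2, hence an integer multiple of the
   gluing element a; so the two spans meet in Q a, and a itself lies in both
   cones since a is in N A^E1 and N A^E2.  The cone of A is generated by the
   two subcones because E1 :|: E2 covers all indices, and pos_Q is idempotent. *)

Section Cones.
Variable n : nat.
Implicit Types (P Q : 'rV[rat]_n -> Prop) (v x y : 'rV[rat]_n).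

Lemma posQ_ind P Q :
  Q 0 -> (forall x y, Q x -> Q y -> Q (x + y)) ->
  (forall c x, 0 <= c -> Q x -> Q (c *: x)) -> (forall x, P x -> Q x) ->
  forall v, posQ P v -> Q v.
Proof.
move=> Q0 QD QZ PQ v [k [x [c [Px [c_ge0 ->]]]]].
by apply: big_ind => // j _; apply: QZ => //; apply: PQ.
Qed.

Lemma spanQ_ind P Q :
  Q 0 -> (forall x y, Q x -> Q y -> Q (x + y)) ->
  (forall c x, Q x -> Q (c *: x)) -> (forall x, P x -> Q x) ->
  forall v, spanQ P v -> Q v.
Proof.
move=> Q0 QD QZ PQ v [k [x [c [Px ->]]]].
by apply: big_ind => // j _; apply: QZ; apply: PQ.
Qed.

Lemma posQ0 P : posQ P 0.
Proof.
by exists 0%N, (fun=> 0), (fun=> 0); rewrite big_ord0; do !split; case.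
Qed.

Lemma posQD P x y : posQ P x -> posQ P y -> posQ P (x + y).
Proof.
move=> [k1 [x1 [c1 [Px1 [c1_ge0 ->]]]]] [k2 [x2 [c2 [Px2 [c2_ge0 ->]]]]].
exists (k1 + k2)%N,
  (fun j => match split j with inl i => x1 i | inr i => x2 i end),
  (fun j => match split j with inl i => c1 i | inr i => c2 i end).
do 2 (split; first by move=> j; case: split).
rewrite big_split_ord; congr (_ + _); apply: eq_bigr => i _.
  by rewrite (unsplitK (inl i)).
by rewrite (unsplitK (inr i)).
Qed.

Lemma posQZ P c x : 0 <= c -> posQ P x -> posQ P (c *: x).
Proof.
move=> c_ge0 [k [y [d [Py [d_ge0 ->]]]]].
exists k, y, (fun j => c * d j); split=> //.
split=> [j|]; first exact: mulr_ge0.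
by rewrite scaler_sumr; apply: eq_bigr => j _; rewrite scalerA.
Qed.

Lemma sub_posQ P x : P x -> posQ P x.
Proof. by exists 1%N, (fun=> x), (fun=> 1); rewrite big_ord1 scale1r. Qed.

Lemma posQ_mono P Q : (forall x, P x -> Q x) -> forall v, posQ P v -> posQ Q v.
Proof.
by move=> PQ v [k [x [c [Px vE]]]]; exists k, x, c; split=> // j; apply: PQ.
Qed.

Lemma posQ_idem P v : posQ (posQ P) v -> posQ P v.
Proof.
by apply: posQ_ind; [exact: posQ0 | exact: posQD | exact: posQZ | move=> x].
Qed.

Lemma spanQ_line P x q : P x -> spanQ P (q *: x).
Proof. by exists 1%N, (fun=> x), (fun=> q); rewrite big_ord1. Qed.

End Cones.

Section Lattice.
Variables (n m : nat) (A : 'I_m -> 'rV[int]_n).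
Implicit Types (E F : {set 'I_m}) (v x y : 'rV[rat]_n) (w : 'rV[int]_n).

Lemma toQ_sum I (r : seq I) (P : pred I) (G : I -> 'rV[int]_n) :
  toQ (\sum_(i <- r | P i) G i) = \sum_(i <- r | P i) toQ (G i).
Proof. exact: map_mx_sum. Qed.

Lemma toQD w1 w2 : toQ (w1 + w2) = toQ w1 + toQ w2.
Proof. exact: map_mxD. Qed.

Lemma toQZ (z : int) w : toQ (z *: w) = z%:~R *: toQ w.
Proof. exact: map_mxZ. Qed.

Lemma toQ_inj : injective (@toQ n).
Proof.
move=> w1 w2 /matrixP eq_w; apply/matrixP => i j.
by have := eq_w i j; rewrite !mxE => /intr_inj.
Qed.

Lemma sigma_mono E F v : E \subset F -> sigma A E v -> sigma A F v.
Proof.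
by move=> /subsetP sEF; apply: posQ_mono => x [i /sEF Fi ->]; exists i.
Qed.

Lemma sigma_NA E w : NA A E w -> sigma A E (toQ w).
Proof.
move=> [c ->]; rewrite toQ_sum; apply: big_ind => [|x y|i Ei].
- exact: posQ0.
- exact: posQD.
- by rewrite toQZ rmorph_nat; apply/posQZ/sub_posQ => //; exists i.
Qed.

Lemma ZA0 E : ZA A E 0.
Proof. by exists (fun=> 0); rewrite big1 // => i _; rewrite scale0r. Qed.

Lemma ZAD E w1 w2 : ZA A E w1 -> ZA A E w2 -> ZA A E (w1 + w2).
Proof.
move=> [c1 ->] [c2 ->]; exists (fun i => c1 i + c2 i).
by rewrite -big_split; apply: eq_bigr => i _; rewrite scalerDl.
Qed.

Lemma ZAZ E (z : int) w : ZA A E w -> ZA A E (z *: w).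
Proof.
move=> [c ->]; exists (fun i => z * c i).
by rewrite scaler_sumr; apply: eq_bigr => i _; rewrite scalerA.
Qed.

Lemma ZA_gen E i : i \in E -> ZA A E (A i).
Proof.
move=> Ei; exists (fun j => (j == i)%:~R).
rewrite (bigD1 i) //= eqxx scale1r big1 ?addr0 // => j /andP [_ /negbTE ->].
by rewrite scale0r.
Qed.

Definition ratZA E v :=
  exists2 D : int, D != 0 & exists2 w, ZA A E w & toQ w = D%:~R *: v.

Lemma ratZA0 E : ratZA E 0.
Proof.
exists 1 => //; exists 0; first exact: ZA0.
by rewrite scaler0 /toQ map_mx0.
Qed.

Lemma ratZAD E x y : ratZA E x -> ratZA E y -> ratZA E (x + y).
Proof.
move=> [D1 D1_neq0 [w1 ZAw1 w1E]] [D2 D2_neq0 [w2 ZAw2 w2E]].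
exists (D1 * D2); first by rewrite mulf_neq0.
exists (D2 *: w1 + D1 *: w2); first by apply: ZAD; apply: ZAZ.
by rewrite toQD !toQZ w1E w2E !scalerA -!rmorphM scalerDr [D2 * D1]mulrC.
Qed.

Lemma ratZAZ E c x : ratZA E x -> ratZA E (c *: x).
Proof.
move=> [D D_neq0 [w ZAw wE]].
exists (denq c * D); first by rewrite mulf_neq0 ?denq_neq0.
exists (numq c *: w); first exact: ZAZ.
by rewrite toQZ wE scalerA rmorphM /= numqE scalerA [_ * c]mulrC mulrA.
Qed.

Lemma ratZA_gens E x : gens A E x -> ratZA E x.
Proof.
move=> [i Ei ->]; exists 1 => //.
by exists (A i); [apply: ZA_gen | rewrite scale1r].
Qed.

Lemma sigma_ratZA E v : sigma A E v -> ratZA E v.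
Proof.
apply: posQ_ind; [exact: ratZA0 | exact: ratZAD | | exact: ratZA_gens].
by move=> c x _; apply: ratZAZ.
Qed.

Lemma spanQ_sigma_ratZA E v : spanQ (sigma A E) v -> ratZA E v.
Proof.
apply: spanQ_ind; [exact: ratZA0 | exact: ratZAD | exact: ratZAZ |].
exact: sigma_ratZA.
Qed.

Lemma ratZA_meet E F (a : 'rV[int]_n) v :
  (forall w, ZA A E w -> ZA A F w -> exists z : int, w = z *: a) ->
  ratZA E v -> ratZA F v -> exists q : rat, v = q *: toQ a.
Proof.
move=> meet_line [D1 D1_neq0 [w1 ZAw1 w1E]] [D2 D2_neq0 [w2 ZAw2 w2E]].
have w1w2 : D2 *: w1 = D1 *: w2.
  by apply: toQ_inj; rewrite !toQZ w1E w2E !scalerA -!rmorphM mulrC.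
have [z zE] : exists z : int, D2 *: w1 = z *: a.
  by apply: meet_line; [apply: ZAZ | rewrite w1w2; apply: ZAZ].
have D_neq0 : (D2 * D1)%:~R != 0 :> rat by rewrite intr_eq0 mulf_neq0.
exists (z%:~R / (D2 * D1)%:~R); apply: (scalerI D_neq0).
by rewrite scalerA mulrCA mulfV // mulr1 -toQZ -zE toQZ w1E scalerA -rmorphM.
Qed.

End Lattice.

Theorem proposition3p1 (n m : nat) (A : 'I_m -> 'rV[int]_n)
    (E1 E2 : {set 'I_m}) :
  affine_semigroup A ->
  E1 != set0 -> E2 != set0 -> [disjoint E1 & E2] -> E1 :|: E2 = setT ->
  gluing A E1 E2 ->
  (exists a : 'rV[rat]_n,
      sigma A E1 a /\ sigma A E2 a /\
      (forall v, (spanQ (sigma A E1) v /\ spanQ (sigma A E2) v) <->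
                 exists q : rat, v = q *: a)) /\
  (forall v, sigma A setT v <->
             posQ (fun w => sigma A E1 w \/ sigma A E2 w) v).
Proof.
move=> _ _ _ _ E12 [a [_ [NAa1 [NAa2 glue]]]]; split.
  exists (toQ a); split; first exact: sigma_NA.
  split; first exact: sigma_NA.
  move=> v; split=> [[/spanQ_sigma_ratZA v1 /spanQ_sigma_ratZA v2] | [q ->]].
    by apply: ratZA_meet v1 v2 => w ZAw1 ZAw2; apply/glue.
  by split; apply/spanQ_line/sigma_NA.
move=> v; split.
  apply: posQ_mono => _ [i _ ->].
  have : i \in E1 :|: E2 by rewrite E12 inE.
  by case/setUP => Ei; [left | right]; apply: sub_posQ; exists i.
move=> v12; apply: posQ_idem; apply: posQ_mono v12 => x.
by case; apply: sigma_mono; rewrite subsetT.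
Qed.
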